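(* Let $f:\mathbb{R}^{m\times n}\to\mathbb{R}$ ($m\ge n$) be differentiable with $\|\nabla f(X)-\nabla f(Y)\|_*\le L\|X-Y\|_2$ for all $X,Y$, where $L>0$. Let $\eta>0$ with $\eta L\le1$, let $X_t, B_t\in\mathbb{R}^{m\times n}$ be arbitrary, let $\Delta_t=\arg\min_\Delta\{\operatorname{tr}(B_t^\top\Delta)+\frac{1}{2\eta}\|\Delta\|_2^2\}$ (i.e. $\Delta_t=-\eta\|B_t\|_*UV^\top$ with $B_t=U\Sigma V^\top$ the compact SVD, $\Delta_t=0$ if $B_t=0$), and $X_{t+1}=X_t+\Delta_t$. Then $$\Big(\frac{\eta}{2}-\frac{\eta^2L}{2}\Big)\|\nabla f(X_t)\|_*^2\le 2\big(f(X_t)-f(X_{t+1})\big)+(2\eta-\eta^2L)\|\nabla f(X_t)-B_t\|_*^2.$$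
   Context: $\|\cdot\|_2$ is the spectral norm (largest singular value) and $\|\cdot\|_*$ the nuclear norm (sum of singular values); $\operatorname{tr}(X^\top Y)$ is the Frobenius inner product. *)

From HB Require Import structures.
From mathcomp Require Import all_boot all_order all_algebra.
From mathcomp Require Import all_classical all_reals all_analysis.
Set Implicit Arguments. Unset Strict Implicit. Unset Printing Implicit Defensive.
Import Order.TTheory GRing.Theory Num.Theory.
Import numFieldNormedType.Exports.
Local Open Scope classical_set_scope.
Local Open Scope ring_scope.

Section Defs.
Context {R : realType} {m n : nat}.

(* Full singular value decomposition A = U S V^T with U, V orthogonal and
   S "rectangular diagonal" with nonnegative entries (the singular values
   are the diagonal entries S i i, i < min m n). *)
Definition is_svd (A : 'M[R]_(m, n)) (U : 'M[R]_m) (S : 'M[R]_(m, n))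
    (V : 'M[R]_n) : Prop :=
  [/\ U^T *m U = 1%:M, V^T *m V = 1%:M,
      (forall (i : 'I_m) (j : 'I_n), (i : nat) <> j -> S i j = 0),
      (forall (i : 'I_m) (j : 'I_n), 0 <= S i j) &
      A = U *m S *m V^T].

Definition sv_mx (A : 'M[R]_(m, n)) : 'M[R]_(m, n) :=
  (xget (0, 0, 0) [set p : 'M[R]_m * 'M[R]_(m, n) * 'M[R]_n |
                   is_svd A p.1.1 p.1.2 p.2]).1.2.

Definition spec_norm (A : 'M[R]_(m, n)) : R :=
  \big[Num.max/0]_(i < m) \big[Num.max/0]_(j < n) sv_mx A i j.

Definition nuc_norm (A : 'M[R]_(m, n)) : R :=
  \sum_(i < m) \sum_(j < n) sv_mx A i j.

(* gradient of f at X: the matrix of partial derivatives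
   (the Frobenius-representer of the differential when f is differentiable) *)
Definition grad (f : 'M[R]_(m, n) -> R) (X : 'M[R]_(m, n)) : 'M[R]_(m, n) :=
  \matrix_(i, j) derive f X (delta_mx i j).

End Defs.

(* The minimizer [Delta] of the spectral-norm model satisfies
   [|Delta|_2 = eta |B|_*] and [tr (B^T Delta) = - eta |B|_*^2], by trace duality
   between the nuclear and spectral norms.  The descent lemma
   [f (X + D) <= f X + tr (grad f(X)^T D) + L/2 |D|_2^2], obtained from the mean
   value theorem and the same duality, then gives
   [2 (f X_t - f X_(t+1)) >= 2 eta b^2 - 2 eta e b - L eta^2 b^2] with
   [b = |B_t|_*] and [e = |grad f(X_t) - B_t|_*]; since
   [|grad f(X_t)|_* <= b + e], the claim reduces to a nonnegative multiple of
   [(b - e)^2].  All the norm facts rest on the existence of a singular value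
   decomposition, built inductively from a unit eigenvector of [A^T A] (real
   because [A^T A] is symmetric) and two Householder reflections. *)

From HB Require Import structures.
From mathcomp Require Import all_boot all_order all_algebra.
From mathcomp Require Import all_classical all_reals all_analysis.
From mathcomp Require Import complex ring lra zify.
Import Order.TTheory GRing.Theory Num.Theory.
Import numFieldNormedType.Exports.
Local Open Scope ring_scope.

Set Implicit Arguments. Unset Strict Implicit.

Section SquaredNorm.
Variable R : realType.

Definition sqnorm k (x : 'cV[R]_k) : R := (x^T *m x) 0 0.

Lemma sqnormE k (x : 'cV[R]_k) : sqnorm x = \sum_i x i 0 ^+ 2.
Proof. by rewrite /sqnorm mxE; apply: eq_bigr => i _; rewrite mxE expr2. Qed.

Lemma sqnorm_ge0 k (x : 'cV[R]_k) : 0 <= sqnorm x.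
Proof. by rewrite sqnormE; apply: sumr_ge0 => i _; exact: sqr_ge0. Qed.

Lemma sqnorm_eq0 k (x : 'cV[R]_k) : (sqnorm x == 0) = (x == 0).
Proof.
apply/idP/eqP => [|->]; last by rewrite /sqnorm mulmx0 mxE.
rewrite sqnormE psumr_eq0 => [/allP x0|i _]; last exact: sqr_ge0.
apply/matrixP => i j; rewrite ord1 mxE; apply/eqP; rewrite -sqrf_eq0.
by apply: x0; rewrite mem_index_enum.
Qed.

Lemma sqnormZ k a (x : 'cV[R]_k) : sqnorm (a *: x) = a ^+ 2 * sqnorm x.
Proof. by rewrite !sqnormE mulr_sumr; apply: eq_bigr => i _; rewrite mxE exprMn. Qed.

Lemma sqnormN k (x : 'cV[R]_k) : sqnorm (- x) = sqnorm x.
Proof. by rewrite -scaleN1r sqnormZ sqrrN expr1n mul1r. Qed.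

Lemma sqnorm_orthomx k (U : 'M[R]_k) (x : 'cV[R]_k) :
  U *m U^T = 1%:M -> sqnorm (U^T *m x) = sqnorm x.
Proof. by move=> UU; rewrite /sqnorm trmx_mul trmxK mulmxA -(mulmxA x^T) UU mulmx1. Qed.

Lemma sqnorm_normalize k (x : 'cV[R]_k) : x != 0 ->
  0 < sqnorm x /\ sqnorm ((Num.sqrt (sqnorm x))^-1 *: x) = 1.
Proof.
move=> xn0; have x_gt0 : 0 < sqnorm x by rewrite lt_def sqnorm_eq0 xn0 sqnorm_ge0.
by rewrite sqnormZ exprVn sqr_sqrtr ?mulVf ?lt0r_neq0 ?ltW.
Qed.

End SquaredNorm.

Section SymmetricEigenvector.
Variable R : realType.

Local Open Scope complex_scope.
Local Notation Re := (@complex.Re R).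
Local Notation Im := (@complex.Im R).

Lemma Re_sum I (r : seq I) (F : I -> R[i]) :
  Re (\sum_(i <- r) F i) = \sum_(i <- r) Re (F i).
Proof. by apply: (big_morph Re) => // -[a b] [c d]. Qed.

Lemma Im_sum I (r : seq I) (F : I -> R[i]) :
  Im (\sum_(i <- r) F i) = \sum_(i <- r) Im (F i).
Proof. by apply: (big_morph Im) => // -[a b] [c d]. Qed.

Lemma Re_mulmx_real k (w : 'rV[R[i]]_k) (M : 'M[R]_k) :
  map_mx Re (w *m map_mx (real_complex R) M) = map_mx Re w *m M.
Proof.
apply/rowP => j; rewrite !mxE Re_sum; apply: eq_bigr => i _.
by rewrite !mxE; case: (w 0 i) => a b /=; rewrite mulr0 subr0.
Qed.

Lemma Im_mulmx_real k (w : 'rV[R[i]]_k) (M : 'M[R]_k) :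
  map_mx Im (w *m map_mx (real_complex R) M) = map_mx Im w *m M.
Proof.
apply/rowP => j; rewrite !mxE Im_sum; apply: eq_bigr => i _.
by rewrite !mxE; case: (w 0 i) => a b /=; rewrite mulr0 add0r mulrC.
Qed.

Lemma Re_scale_mx k (z : R[i]) (w : 'rV[R[i]]_k) :
  map_mx Re (z *: w) = Re z *: map_mx Re w - Im z *: map_mx Im w.
Proof. by apply/rowP => j; rewrite !mxE; case: z; case: (w 0 j). Qed.

Lemma Im_scale_mx k (z : R[i]) (w : 'rV[R[i]]_k) :
  map_mx Im (z *: w) = Re z *: map_mx Im w + Im z *: map_mx Re w.
Proof. by apply/rowP => j; rewrite !mxE; case: z; case: (w 0 j) => a b c d /=; ring. Qed.

Lemma Re_Im_mx_eq0 k (w : 'rV[R[i]]_k) :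
  map_mx Re w = 0 -> map_mx Im w = 0 -> w = 0.
Proof.
move=> /rowP Hre /rowP Him; apply/rowP => j.
by move: (Hre j) (Him j); rewrite !mxE; case: (w 0 j) => a b /= -> ->.
Qed.

Lemma symmetric_eigenvector k (M : 'M[R]_k.+1) : M^T = M ->
  exists mu (v : 'cV[R]_k.+1), v != 0 /\ M *m v = mu *: v.
Proof.
move=> Msym.
have [z /eigenvalueP [w wM wn0]] :=
  eigenvalue_closed (map_mx (real_complex R) M) (ltn0Sn k).
set a := map_mx Re w; set b := map_mx Im w.
have aM : a *m M = Re z *: a - Im z *: b by rewrite -Re_mulmx_real wM Re_scale_mx.
have bM : b *m M = Re z *: b + Im z *: a by rewrite -Im_mulmx_real wM Im_scale_mx.
have form_sym (x y : 'rV[R]_k.+1) N : N^T = N ->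
    (x *m N *m y^T) 0 0 = (y *m N *m x^T) 0 0.
  have tr11 (P : 'M[R]_1) : P 0 0 = P^T 0 0 by rewrite mxE.
  move=> Nsym; rewrite tr11.
  by rewrite !trmx_mul !trmxK Nsym mulmxA.
have e00 (c d : R) (P Q : 'M[R]_1) :
    (c *: P + d *: Q) 0 0 = c * P 0 0 + d * Q 0 0 /\
    (c *: P - d *: Q) 0 0 = c * P 0 0 - d * Q 0 0 by rewrite !mxE.
have ab_sym := form_sym a b 1%:M (trmx1 _ _); rewrite !mulmx1 in ab_sym.
have Im_z0 : Im z * (sqnorm a^T + sqnorm b^T) = 0.
  move: (form_sym a b M Msym); rewrite aM bM mulmxBl mulmxDl -!scalemxAl (e00 _ _ _ _).1 (e00 _ _ _ _).2.
  by rewrite /sqnorm !trmxK ab_sym => /addrI E; rewrite mulrDr -E addNr.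
have ab_n0 : sqnorm a^T + sqnorm b^T != 0.
  rewrite paddr_eq0 ?sqnorm_ge0 // !sqnorm_eq0 !trmx_eq0; apply: contra wn0.
  by case/andP => /eqP a0 /eqP b0; apply/eqP/Re_Im_mx_eq0.
move: Im_z0 => /eqP; rewrite mulf_eq0 (negbTE ab_n0) orbF => /eqP Im_z0.
rewrite Im_z0 scale0r subr0 in aM; rewrite Im_z0 scale0r addr0 in bM.
have eigen_tr (x : 'rV[R]_k.+1) : x *m M = Re z *: x -> M *m x^T = Re z *: x^T.
  by move=> xM; rewrite -[M]Msym -trmx_mul xM linearZ.
exists (Re z); have [a0|an0] := eqVneq a 0.
  exists b^T; rewrite trmx_eq0 eigen_tr //; split=> //.
  by apply: contra wn0 => /eqP b0; apply/eqP/Re_Im_mx_eq0.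
by exists a^T; rewrite trmx_eq0 eigen_tr.
Qed.

End SymmetricEigenvector.

Section SVDExistence.
Variable R : realType.

Lemma mul_outer_mx k p (x : 'M[R]_(k, 1)) (y z : 'cV[R]_p) :
  x *m y^T *m z = (y^T *m z) 0 0 *: x.
Proof. by rewrite -mulmxA {1}[y^T *m z]mx11_scalar mul_mx_scalar. Qed.

(* The Householder reflection [1 - 2 w w^T / |w|^2] with [w = u - e_0]. *)
Lemma orthomx_e0_to_unit k (u : 'cV[R]_k.+1) : sqnorm u = 1 ->
  exists H : 'M[R]_k.+1, H^T *m H = 1%:M /\ H *m delta_mx 0 0 = u.
Proof.
move=> u1; set e := delta_mx 0 0 : 'cV[R]_k.+1.
have [->|une] := eqVneq u e; first by exists 1%:M; rewrite trmx1 mulmx1 mul1mx.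
have dot_e (v : 'cV[R]_k.+1) : (v^T *m e) 0 0 = v 0 0 by rewrite -colE !mxE.
have e_dot (v : 'cV[R]_k.+1) : (e^T *m v) 0 0 = v 0 0 by rewrite trmx_delta -rowE !mxE.
have sub00 (A B : 'M[R]_1) : (A - B) 0 0 = A 0 0 - B 0 0 by rewrite !mxE.
set w := u - e; set c := sqnorm w; set P := w *m w^T.
have c_def : c = 2 - 2 * u 0 0.
  rewrite /c /sqnorm /w mulmxBr [(u - e)^T]linearB /= !mulmxBl !sub00.
  move: u1; rewrite /sqnorm => ->; rewrite dot_e !e_dot /e mxE /=; ring.
have c_n0 : c != 0 by rewrite sqnorm_eq0 subr_eq0.
set s := 2 / c.
exists (1%:M - s *: P); split.
  have H_sym : (1%:M - s *: P)^T = 1%:M - s *: P.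
    by rewrite linearB /= linearZ /= trmx1 /P trmx_mul trmxK.
  have PP : P *m P = c *: P by rewrite /P mulmxA mul_outer_mx -scalemxAl.
  rewrite H_sym mulmxBl mul1mx mulmxBr mulmx1 -scalemxAl -scalemxAr PP !scalerA.
  have -> : s * s * c = s + s by rewrite /s; field.
  by rewrite scalerDl opprB addrK subrK.
rewrite mulmxBl mul1mx -scalemxAl /P mul_outer_mx dot_e !mxE eqxx mulr1n scalerA.
have -> : s * (u 0 0 - 1) = -1 by move: c_n0; rewrite /s c_def => ?; field.
by rewrite scaleN1r opprK addrC subrK.
Qed.

Lemma left_kernel_unit m n (A : 'M[R]_(m, n)) (v : 'cV[R]_n) : (n <= m)%N ->
  v != 0 -> A *m v = 0 -> exists u : 'cV[R]_m, sqnorm u = 1 /\ A^T *m u = 0.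
Proof.
move=> nm vn0 Av0.
have vA : (v^T <= kermx A^T)%MS by apply/sub_kermxP; rewrite -trmx_mul Av0 trmx0.
have rk_v : (0 < \rank v^T)%N by rewrite lt0n mxrank_eq0 trmx_eq0.
have rk_kerA : (0 < \rank (kermx A))%N.
  move: rk_v (mxrankS vA); rewrite !mxrank_ker !mxrank_tr; lia.
set x := nz_row (kermx A).
have xn0 : x^T != 0 by rewrite trmx_eq0 nz_row_eq0 -mxrank_eq0 -lt0n.
have xA : x *m A = 0 by apply/sub_kermxP; exact: nz_row_sub.
have [_ x1] := sqnorm_normalize xn0.
exists ((Num.sqrt (sqnorm x^T))^-1 *: x^T); split => //.
by rewrite -scalemxAr -trmx_mul xA trmx0 scaler0.
Qed.

(* [v] is a unit eigenvector of [A^T A] and [u] the normalized image [A v]. *)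
Lemma singular_pair m n (A : 'M[R]_(m.+1, n.+1)) : (n <= m)%N ->
  exists (u : 'cV[R]_m.+1) (v : 'cV[R]_n.+1) (s : R),
    [/\ sqnorm u = 1, sqnorm v = 1, 0 <= s, A *m v = s *: u & A^T *m u = s *: v].
Proof.
move=> nm; set M := A^T *m A.
have M_sym : M^T = M by rewrite /M trmx_mul trmxK.
have [mu [x [xn0 Mx]]] := symmetric_eigenvector M_sym.
have [_ v1] := sqnorm_normalize xn0.
set v := _ *: x in v1.
have Mv : M *m v = mu *: v by rewrite /v -scalemxAr Mx !scalerA mulrC.
set w := A *m v.
have w_mu : sqnorm w = mu.
  rewrite /sqnorm /w trmx_mul -mulmxA (mulmxA A^T) -/M Mv -scalemxAr mxE.
  by move: v1; rewrite /sqnorm => ->; rewrite mulr1.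
have [w0|wn0] := eqVneq w 0.
  have vn0 : v != 0 by rewrite -sqnorm_eq0 v1 oner_neq0.
  have [u [u1 Atu]] := left_kernel_unit (nm : (n.+1 <= m.+1)%N) vn0 w0.
  by exists u, v, 0; rewrite !scale0r -/w w0.
have [w_gt0 u1] := sqnorm_normalize wn0.
set s := Num.sqrt (sqnorm w) in u1 *.
have s_n0 : s != 0 by rewrite sqrtr_eq0 -ltNge.
exists (s^-1 *: w), v, s; split => //; first exact: sqrtr_ge0.
  by rewrite scalerA divff // scale1r.
rewrite -scalemxAr /w mulmxA -/M Mv scalerA; congr (_ *: _).
by rewrite -w_mu -[sqnorm w]sqr_sqrtr ?(ltW w_gt0) // -/s; field.
Qed.

End SVDExistence.

Section Blocks.
Variable R : realType.

Lemma block_mx_rowcol0 m n (s : R) (B : 'M[R]_(1 + m, 1 + n)) :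
  col 0 B = s *: delta_mx 0 0 -> row 0 B = s *: delta_mx 0 0 ->
  B = block_mx s%:M 0 0 (drsubmx B).
Proof.
move=> /matrixP Bc /matrixP Br.
have lshift0 k : lshift k (0 : 'I_1) = 0 :> 'I_(1 + k) by apply/val_inj.
have rshift_n0 k (j : 'I_k) : (rshift 1 j == 0 :> 'I_(1 + k)) = false by [].
rewrite -[B in LHS]submxK; congr block_mx; apply/matrixP => i j; rewrite !ord1 !mxE ?lshift0.
- by move: (Bc 0 0); rewrite !mxE eqxx mulr1.
- by move: (Br 0 (rshift 1 j)); rewrite !mxE rshift_n0 andbF mulr0.
- by move: (Bc (rshift 1 i) 0); rewrite !mxE rshift_n0 mulr0.
Qed.

Lemma orthomx_block1 m (U : 'M[R]_m) : U^T *m U = 1%:M ->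
  (block_mx (1%:M : 'M[R]_1) 0 0 U)^T *m block_mx (1%:M : 'M[R]_1) 0 0 U = 1%:M.
Proof.
move=> UU; rewrite tr_block_mx !trmx0 trmx1 mulmx_block UU.
by rewrite !mulmx0 !mul0mx !mulmx1 !addr0 !add0r -scalar_mx_block.
Qed.

Lemma mul_block1 m n (s : R) (U : 'M[R]_m) (S : 'M[R]_(m, n)) (V : 'M[R]_n) :
  block_mx (1%:M : 'M[R]_1) 0 0 U *m block_mx (s%:M : 'M[R]_1) 0 0 S
    *m (block_mx (1%:M : 'M[R]_1) 0 0 V)^T
  = block_mx (s%:M : 'M[R]_1) 0 0 (U *m S *m V^T).
Proof.
rewrite -mulmxA tr_block_mx !trmx0 trmx1 !mulmx_block.
by rewrite !mulmx0 !mul0mx !mulmx1 !mul1mx !addr0 !add0r mulmx0 mulmxA.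
Qed.

Lemma block_mx_diag m n (s : R) (S : 'M[R]_(m, n)) :
  (forall (i : 'I_m) (j : 'I_n), (i : nat) <> j -> S i j = 0) ->
  forall (i : 'I_(1 + m)) (j : 'I_(1 + n)), (i : nat) <> j ->
    block_mx (s%:M : 'M[R]_1) 0 0 S i j = 0.
Proof.
move=> S_diag i j; case: (split_ordP i) => i' ->; case: (split_ordP j) => j' -> /= ij;
  rewrite ?block_mxEul ?block_mxEur ?block_mxEdl ?block_mxEdr ?mxE //.
- by case: ij; rewrite !ord1.
- by apply: S_diag => /= i'j'; apply: ij; rewrite i'j'.
Qed.

Lemma block_mx_ge0 m n (s : R) (S : 'M[R]_(m, n)) : 0 <= s ->
  (forall i j, 0 <= S i j) ->
  forall (i : 'I_(1 + m)) (j : 'I_(1 + n)), 0 <= block_mx (s%:M : 'M[R]_1) 0 0 S i j.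
Proof.
move=> s0 S0 i j; case: (split_ordP i) => i' ->; case: (split_ordP j) => j' ->;
  rewrite ?block_mxEul ?block_mxEur ?block_mxEdl ?block_mxEdr ?mxE //.
by rewrite !ord1 eqxx mulr1n.
Qed.

End Blocks.

(* Peel off one singular pair with two Householder reflections and recurse on
   the remaining block. *)
Lemma svd_exists (R : realType) n : forall m (A : 'M[R]_(m, n)), (n <= m)%N ->
  exists U S V, is_svd A U S V.
Proof.
elim: n => [|n IH] m A nm.
  exists 1%:M, 0, 1%:M; split; rewrite ?trmx1 ?mulmx1 //; try by move=> *; rewrite mxE.
  by rewrite [A]thinmx0 [RHS]thinmx0.
case: m A nm => [|m] A // nm.
have [u [v [s [u1 v1 s0 Av Atu]]]] := singular_pair A nm.
have [Hu [Hu_orth Hu_e]] := orthomx_e0_to_unit u1.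
have [Hv [Hv_orth Hv_e]] := orthomx_e0_to_unit v1.
pose B : 'M[R]_(1 + m, 1 + n) := Hu^T *m A *m Hv.
have Bcol : col 0 B = s *: delta_mx 0 0.
  by rewrite colE /B -!mulmxA Hv_e Av -scalemxAr -Hu_e mulmxA Hu_orth mul1mx.
have Brow : row 0 B = s *: delta_mx 0 0.
  have : (delta_mx 0 0 : 'cV_m.+1)^T *m B = s *: (delta_mx 0 0 : 'cV_n.+1)^T.
    rewrite /B !mulmxA -trmx_mul Hu_e -[u^T *m A]trmxK trmx_mul trmxK Atu linearZ /=.
    by rewrite -scalemxAl -Hv_e trmx_mul -mulmxA Hv_orth mulmx1.
  by rewrite !trmx_delta -rowE.
have A_B : A = Hu *m B *m Hv^T.
  by rewrite /B !mulmxA (mulmx1C Hu_orth) mul1mx -mulmxA (mulmx1C Hv_orth) mulmx1.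
clearbody B.
have [U [S [V [U_orth V_orth S_diag S_ge0 BU]]]] := IH m (drsubmx B) nm.
exists (Hu *m block_mx (1%:M : 'M[R]_1) 0 0 U), (block_mx (s%:M : 'M[R]_1) 0 0 S),
  (Hv *m block_mx (1%:M : 'M[R]_1) 0 0 V); split.
- by rewrite trmx_mul -mulmxA (mulmxA Hu^T) Hu_orth mul1mx orthomx_block1.
- by rewrite trmx_mul -mulmxA (mulmxA Hv^T) Hv_orth mul1mx orthomx_block1.
- exact: block_mx_diag.
- exact: block_mx_ge0.
rewrite A_B trmx_mul -!mulmxA; congr (Hu *m _); rewrite !mulmxA; congr (_ *m Hv^T).
by rewrite mul_block1 -BU; exact: block_mx_rowcol0.
Qed.

Section BilinearForm.
Variable R : realType.

Definition mxform k l (u : 'cV[R]_k) (A : 'M[R]_(k, l)) (v : 'cV[R]_l) : R :=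
  (u^T *m A *m v) 0 0.

Lemma mxformE k l (u : 'cV[R]_k) (A : 'M[R]_(k, l)) (v : 'cV[R]_l) :
  mxform u A v = \sum_i \sum_j u i 0 * A i j * v j 0.
Proof.
rewrite /mxform mxE exchange_big /=; apply: eq_bigr => i _.
by rewrite mxE mulr_suml; apply: eq_bigr => j _; rewrite !mxE.
Qed.

Lemma mxformZ k l (u : 'cV[R]_k) c (A : 'M[R]_(k, l)) v :
  mxform u (c *: A) v = c * mxform u A v.
Proof. by rewrite /mxform -scalemxAr -scalemxAl mxE. Qed.

Lemma mxformN k l (u : 'cV[R]_k) (A : 'M[R]_(k, l)) v :
  mxform u (- A) v = mxform (- u) A v.
Proof. by rewrite /mxform mulmxN mulNmx linearN /= !mulNmx. Qed.

Lemma mxform_mulmx k l (u : 'cV[R]_k) (U : 'M[R]_k) (S : 'M[R]_(k, l))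
    (V : 'M[R]_l) v :
  mxform u (U *m S *m V^T) v = mxform (U^T *m u) S (V^T *m v).
Proof. by rewrite /mxform trmx_mul trmxK !mulmxA. Qed.

Lemma mulmx3E a b c d (X : 'M[R]_(a, b)) (Y : 'M[R]_(b, c)) (Z : 'M[R]_(c, d)) i j :
  (X *m Y *m Z) i j = mxform (row i X)^T Y (col j Z).
Proof.
rewrite /mxform trmxK !mxE; apply: eq_bigr => k _; rewrite !mxE; congr (_ * _).
by apply: eq_bigr => l _; rewrite !mxE.
Qed.

Lemma sqnorm_col_orthomx k (U : 'M[R]_k) i : U^T *m U = 1%:M -> sqnorm (col i U) = 1.
Proof.
move=> /(congr1 (fun M : 'M[R]_k => M i i)); rewrite !mxE eqxx mulr1n => <-.
by rewrite /sqnorm mxE; apply: eq_bigr => l _; rewrite !mxE.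
Qed.

Lemma sum_le_single l (g : 'I_l -> R) (c : nat) (K : R) : 0 <= K ->
  (forall j : 'I_l, (j : nat) <> c -> g j = 0) -> (forall j, g j <= K) ->
  \sum_j g j <= K.
Proof.
move=> K0 g0 gK; have [cl|lc] := ltnP c l.
  rewrite (bigD1 (Ordinal cl)) //= big1 ?addr0 // => j /eqP jn.
  by apply: g0 => jc; apply: jn; apply/val_inj.
by rewrite big1 // => j _; apply: g0 => jc; move: (ltn_ord j); rewrite jc; lia.
Qed.

(* Since [2 p_i S_ij q_j <= S_ij (p_i^2 + q_j^2)] and every row and column of
   [S] has a single nonzero entry. *)
Lemma mxform_diag_le k l (S : 'M[R]_(k, l)) (K : R) (p : 'cV[R]_k) (q : 'cV[R]_l) :
  0 <= K -> (forall (i : 'I_k) (j : 'I_l), (i : nat) <> j -> S i j = 0) ->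
  (forall i j, 0 <= S i j) -> (forall i j, S i j <= K) ->
  sqnorm p = 1 -> sqnorm q = 1 -> mxform p S q <= K.
Proof.
move=> K0 S_diag S0 SK p1 q1; rewrite mxformE.
apply: (@le_trans _ _ (\sum_i \sum_j (S i j * p i 0 ^+ 2 + S i j * q j 0 ^+ 2) / 2)).
  apply: ler_sum => i _; apply: ler_sum => j _.
  have := S0 i j; move: (S i j) (p i 0) (q j 0) => s a b s0.
  have := mulr_ge0 s0 (sqr_ge0 (a - b)); nra.
have -> : \sum_i \sum_j (S i j * p i 0 ^+ 2 + S i j * q j 0 ^+ 2) / 2 =
    (\sum_i p i 0 ^+ 2 * \sum_j S i j + \sum_j q j 0 ^+ 2 * \sum_i S i j) / 2.
  under eq_bigr do rewrite -mulr_suml; rewrite -mulr_suml; congr (_ / 2).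
  under eq_bigr do rewrite big_split; rewrite big_split /=; congr (_ + _).
    by apply: eq_bigr => i _; rewrite mulr_sumr; apply: eq_bigr => j _; rewrite mulrC.
  rewrite exchange_big; apply: eq_bigr => j _.
  by rewrite mulr_sumr; apply: eq_bigr => i _; rewrite mulrC.
have rows : \sum_i p i 0 ^+ 2 * \sum_j S i j <= K.
  rewrite -[X in _ <= X]mul1r -p1 sqnormE mulr_suml.
  apply: ler_sum => i _; apply: ler_wpM2l; first exact: sqr_ge0.
  by apply: (@sum_le_single _ _ i) => // j ji; apply: S_diag => ij; apply: ji.
have cols : \sum_j q j 0 ^+ 2 * \sum_i S i j <= K.
  rewrite -[X in _ <= X]mul1r -q1 sqnormE mulr_suml.
  apply: ler_sum => j _; apply: ler_wpM2l; first exact: sqr_ge0.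
  by apply: (@sum_le_single _ _ j) => // i; exact: S_diag.
lra.
Qed.

Lemma mxtrace_tr_mulE m n (S W : 'M[R]_(m, n)) :
  \tr (S^T *m W) = \sum_i \sum_j S i j * W i j.
Proof.
rewrite /mxtrace exchange_big; apply: eq_bigr => j _; rewrite mxE.
by apply: eq_bigr => i _; rewrite mxE.
Qed.

Lemma mxtrace_tr_mul_svd m n (U : 'M[R]_m) (S : 'M[R]_(m, n)) (V : 'M[R]_n) C :
  V^T *m V = 1%:M -> \tr ((U *m S *m V^T)^T *m C) = \tr (S^T *m (U^T *m C *m V)).
Proof. by move=> VV; rewrite !trmx_mul trmxK -!mulmxA mxtrace_mulC -!mulmxA. Qed.

End BilinearForm.

Section SpectralNuclear.
Variables (R : realType) (m n : nat).
Hypothesis n_le_m : (n <= m)%N.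
Implicit Types A B C : 'M[R]_(m, n).

Lemma svd_sv_mx A : exists U V, is_svd A U (sv_mx A) V.
Proof.
have [U [S [V svdA]]] := svd_exists A n_le_m.
set P := [set p : 'M[R]_m * 'M[R]_(m, n) * 'M[R]_n | is_svd A p.1.1 p.1.2 p.2]%classic.
have : P (xget (0, 0, 0) P) by apply: xgetPex; exists (U, S, V).
by exists (xget (0, 0, 0) P).1.1, (xget (0, 0, 0) P).2.
Qed.

Lemma spec_norm_ge0 A : 0 <= spec_norm A.
Proof. exact: bigmax_ge_id. Qed.

Lemma sv_mx_le_spec_norm A i j : sv_mx A i j <= spec_norm A.
Proof.
apply: le_trans (le_bigmax _ _ i).
exact: (le_bigmax _ (fun j => sv_mx A i j) j).
Qed.

Lemma nuc_norm_ge0 A : 0 <= nuc_norm A.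
Proof.
have [U [V [_ _ _ S0 _]]] := svd_sv_mx A.
by apply: sumr_ge0 => i _; apply: sumr_ge0 => j _.
Qed.

Lemma mxform_le_spec_norm A u v : sqnorm u = 1 -> sqnorm v = 1 ->
  mxform u A v <= spec_norm A.
Proof.
move=> u1 v1; have [U [V [UU VV S_diag S0 AE]]] := svd_sv_mx A.
rewrite {1}AE mxform_mulmx; apply: mxform_diag_le => //.
- exact: spec_norm_ge0.
- exact: sv_mx_le_spec_norm.
- by rewrite sqnorm_orthomx // mulmx1C.
- by rewrite sqnorm_orthomx // mulmx1C.
Qed.

Lemma spec_norm_le A K : 0 <= K ->
  (forall u v, sqnorm u = 1 -> sqnorm v = 1 -> mxform u A v <= K) ->
  spec_norm A <= K.
Proof.
move=> K0 AK; have [U [V [UU VV _ _ AE]]] := svd_sv_mx A.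
rewrite /spec_norm; have -> : sv_mx A = U^T *m A *m V.
  by rewrite {2}AE !mulmxA UU mul1mx -mulmxA VV mulmx1.
apply: bigmax_le => // i _; apply: bigmax_le => // j _.
by rewrite mulmx3E tr_row trmxK; apply: AK; exact: sqnorm_col_orthomx.
Qed.

Lemma spec_normZ_le A c : 0 <= c -> spec_norm (c *: A) <= c * spec_norm A.
Proof.
move=> c0; apply: spec_norm_le => [|u v u1 v1]; first by rewrite mulr_ge0 ?spec_norm_ge0.
by rewrite mxformZ ler_wpM2l ?mxform_le_spec_norm.
Qed.

Lemma spec_normN A : spec_norm (- A) = spec_norm A.
Proof.
suff le_N B : spec_norm (- B) <= spec_norm B by apply/le_anti; rewrite le_N -{1}[A]opprK le_N.
apply: spec_norm_le => [|u v u1 v1]; first exact: spec_norm_ge0.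
by rewrite mxformN mxform_le_spec_norm ?sqnormN.
Qed.

Lemma mxtrace_le_nuc_spec A C : \tr (A^T *m C) <= nuc_norm A * spec_norm C.
Proof.
have [U [V [UU VV _ S0 AE]]] := svd_sv_mx A.
rewrite {1}AE mxtrace_tr_mul_svd // mxtrace_tr_mulE /nuc_norm mulr_suml.
apply: ler_sum => i _; rewrite mulr_suml; apply: ler_sum => j _.
rewrite ler_wpM2l // mulmx3E tr_row trmxK.
by apply: mxform_le_spec_norm; exact: sqnorm_col_orthomx.
Qed.

(* The duality is attained at [W = U I V^T]. *)
Lemma nuc_norm_attained A :
  exists2 W, \tr (A^T *m W) = nuc_norm A & spec_norm W <= 1.
Proof.
have [U [V [UU VV S_diag _ AE]]] := svd_sv_mx A.
pose I : 'M[R]_(m, n) := \matrix_(i, j) ((i : nat) == j)%:R.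
exists (U *m I *m V^T).
  rewrite {1}AE mxtrace_tr_mul_svd //.
  rewrite (_ : U^T *m _ *m V = I); last first.
    by rewrite !mulmxA UU mul1mx -mulmxA VV mulmx1.
  rewrite mxtrace_tr_mulE; apply: eq_bigr => i _; apply: eq_bigr => j _.
  by rewrite mxE; case: eqP => [_|/S_diag ->]; rewrite ?mulr1 ?mul0r.
apply: spec_norm_le => // u v u1 v1; rewrite mxform_mulmx.
apply: mxform_diag_le => //; try by move=> i j; rewrite mxE; case: eqP.
- by rewrite sqnorm_orthomx // mulmx1C.
- by rewrite sqnorm_orthomx // mulmx1C.
Qed.

Lemma ler_nuc_normD A B : nuc_norm (A + B) <= nuc_norm A + nuc_norm B.
Proof.
have [W AB_W W1] := nuc_norm_attained (A + B).
have trW C : \tr (C^T *m W) <= nuc_norm C.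
  apply: le_trans (mxtrace_le_nuc_spec C W) _.
  by rewrite -[leRHS]mulr1 ler_wpM2l ?nuc_norm_ge0.
by rewrite -AB_W linearD /= mulmxDl mxtraceD lerD.
Qed.

End SpectralNuclear.

Section Descent.
Local Open Scope classical_set_scope.
Variables (R : realType) (m n : nat).
Implicit Types (f : 'M[R]_(m, n) -> R) (X D : 'M[R]_(m, n)).

Lemma derive_grad f X D : differentiable f X ->
  derive f X D = \tr ((grad f X)^T *m D).
Proof.
move=> df; rewrite mxtrace_tr_mulE deriveE // {1}(matrix_sum_delta D) linear_sum.
apply: eq_bigr => i _; rewrite linear_sum; apply: eq_bigr => j _.
by rewrite linearZ /= mxE deriveE // mulrC.
Qed.

Lemma is_derive_line f X D (s : R) : differentiable f (X + s *: D) ->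
  is_derive s 1 (fun t => f (X + t *: D)) (derive f (X + s *: D) D).
Proof.
move=> df.
have E : (fun h : R => h^-1 *: (((fun t => f (X + t *: D)) \o shift s) (h *: 1)
                                 - f (X + s *: D)))
       = (fun h => h^-1 *: ((f \o shift (X + s *: D)) (h *: D) - f (X + s *: D))).
  apply: funext => h /=; congr (_ *: (f _ - _)).
  by rewrite -[h%:A]/(h * 1) mulr1 scalerDl addrCA.
apply: DeriveDef; first by rewrite /derivable E; exact: diff_derivable.
by rewrite /derive E.
Qed.

Hypothesis n_le_m : (n <= m)%N.
Variables (f : 'M[R]_(m, n) -> R) (L : R).
Hypothesis f_diff : forall X, differentiable f X.
Hypothesis L_ge0 : 0 <= L.
Hypothesis grad_lip :
  forall X Y, nuc_norm (grad f X - grad f Y) <= L * spec_norm (X - Y).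

Lemma derive_line_lip X D (t : R) : 0 <= t ->
  derive f (X + t *: D) D - derive f X D <= L * spec_norm D ^+ 2 * t.
Proof.
move=> t0; rewrite !derive_grad // -raddfB /= -mulmxBl -raddfB /=.
apply: le_trans (mxtrace_le_nuc_spec n_le_m _ _) _.
have lip := grad_lip (X + t *: D) X; rewrite addrAC subrr add0r in lip.
have lip_t := le_trans lip (ler_wpM2l L_ge0 (spec_normZ_le n_le_m D t0)).
apply: le_trans (ler_wpM2r (spec_norm_ge0 D) lip_t) _.
by rewrite [leRHS](_ : _ = L * (t * spec_norm D) * spec_norm D) //; ring.
Qed.

(* Mean value theorem applied to
   [t |-> f (X + t D) - t f'(X; D) - L |D|^2 t^2 / 2] on [0, 1]. *)
Lemma descent_lemma X D :
  f (X + D) <= f X + \tr ((grad f X)^T *m D) + L / 2 * spec_norm D ^+ 2.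
Proof.
set g0 := \tr ((grad f X)^T *m D); set c := L * spec_norm D ^+ 2.
pose q : {poly R} := g0 *: 'X + (c / 2) *: 'X^2.
pose psi := (fun t => f (X + t *: D)) - horner q.
have q' x : q^`().[x] = g0 + c * x.
  have two_n0 : (2 : R) != 0 by rewrite pnatr_eq0.
  by rewrite /q derivD !derivZ derivX derivXn /= !hornerE /=; field.
have psi' (x : R) : is_derive x 1 psi (derive f (X + x *: D) D - (g0 + c * x)).
  by rewrite -q'; apply: is_deriveB; exact: is_derive_line.
have psi_cont : {within `[0, 1], continuous psi}.
  apply: continuous_subspaceT => x; apply: differentiable_continuous.
  by apply/derivable1_diffP; case: (psi' x).
have [x0 x0_in psi01] := MVT ltr01 (fun x _ => psi' x) psi_cont.
have x0_ge0 : 0 <= x0 by move: x0_in; rewrite in_itv /= => /andP [/ltW].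
have psi'_le0 : derive f (X + x0 *: D) D - (g0 + c * x0) <= 0.
  have := derive_line_lip X D x0_ge0.
  by rewrite [derive f X D]derive_grad // -/g0 -/c; lra.
have : psi 1 - psi 0 <= 0 by rewrite psi01 subr0 mulr1.
have psiE t : psi t = f (X + t *: D) - q.[t] by [].
rewrite !psiE /q !(hornerD, hornerZ, hornerX, hornerXn) scale1r scale0r addr0.
by rewrite expr1n expr0n /= /c; lra.
Qed.

End Descent.

(* Compare [Delta] with [- eta |B|_* W] for a dual certificate [W] of [B]. *)
Lemma spectral_step_norm (R : realType) m n (eta : R) (B Delta : 'M[R]_(m, n)) :
  (n <= m)%N -> 0 < eta ->
  (forall D, \tr (B^T *m Delta) + (2 * eta)^-1 * spec_norm Delta ^+ 2
             <= \tr (B^T *m D) + (2 * eta)^-1 * spec_norm D ^+ 2) ->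
  spec_norm Delta = eta * nuc_norm B /\
  \tr (B^T *m Delta) = - (eta * nuc_norm B ^+ 2).
Proof.
move=> nm eta_gt0 opt.
set b := nuc_norm B; set d := spec_norm Delta; set T := \tr (B^T *m Delta).
set k := (2 * eta)^-1.
have b_ge0 : 0 <= b := nuc_norm_ge0 nm B.
have d_ge0 : 0 <= d := spec_norm_ge0 Delta.
have eb_ge0 : 0 <= eta * b by rewrite mulr_ge0 // ltW.
have k_gt0 : 0 < k by rewrite invr_gt0 mulr_gt0.
have k_eta : 2 * eta * k = 1 by rewrite mulfV // gt_eqF ?mulr_gt0.
have T_ge : - (b * d) <= T.
  rewrite lerNl /T /d -(spec_normN nm Delta) -raddfN /= -mulmxN.
  exact: mxtrace_le_nuc_spec.
have T_le : T + k * d ^+ 2 <= - (eta * b * b) + k * (eta * b) ^+ 2.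
  have [W BW W_le1] := nuc_norm_attained nm B.
  have ebW_le : spec_norm ((eta * b) *: - W) <= eta * b.
    apply: le_trans (spec_normZ_le nm _ eb_ge0) _.
    by rewrite spec_normN // -[leRHS]mulr1 ler_wpM2l.
  apply: le_trans (opt ((eta * b) *: - W)) _.
  rewrite -scalemxAr mxtraceZ mulmxN raddfN /= BW mulrN lerD2l.
  apply: ler_wpM2l; first exact: ltW.
  by rewrite ler_pXn2r ?nnegrE ?spec_norm_ge0.
have d_eq : d = eta * b.
  have sq_expand : k * (d - eta * b) ^+ 2 = k * d ^+ 2 - b * d + k * (eta * b) ^+ 2.
    by rewrite -[b * d]mul1r -[X in X * (b * d)]k_eta; ring.
  have k_eb : 2 * (k * (eta * b) ^+ 2) = eta * b * b.
    by rewrite -[RHS]mul1r -[X in _ = X * _]k_eta; ring.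
  have : k * (d - eta * b) ^+ 2 <= 0 by rewrite sq_expand; lra.
  rewrite pmulr_rle0 // => sq_le0; apply/eqP; rewrite -subr_eq0 -sqrf_eq0.
  by rewrite eq_le sq_le0 sqr_ge0.
rewrite d_eq lerD2r in T_le; rewrite d_eq in T_ge.
split=> //; apply/le_anti/andP; split; first by rewrite expr2 mulrA.
by rewrite expr2 mulrCA.
Qed.

Lemma scalar_step_bound (R : realFieldType) (eta L a b e : R) :
  0 < eta -> eta * L <= 1 -> 0 <= a -> 0 <= b -> 0 <= e -> a <= b + e ->
  (eta / 2 - eta ^+ 2 * L / 2) * a ^+ 2
  <= 2 * eta * b ^+ 2 - 2 * eta * e * b - L * (eta * b) ^+ 2
     + (2 * eta - eta ^+ 2 * L) * e ^+ 2.
Proof.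
move=> eta_gt0 etaL a_ge0 b_ge0 e_ge0 a_le.
set c := eta / 2 - eta ^+ 2 * L / 2.
have c_ge0 : 0 <= c.
  by rewrite /c -mulrBl divr_ge0 // expr2 -mulrA subr_ge0 ger_pMr.
apply: le_trans (_ : c * (b + e) ^+ 2 <= _).
  by rewrite ler_wpM2l // ler_pXn2r ?nnegrE ?addr_ge0.
rewrite -subr_ge0.
have -> : 2 * eta * b ^+ 2 - 2 * eta * e * b - L * (eta * b) ^+ 2
          + (2 * eta - eta ^+ 2 * L) * e ^+ 2 - c * (b + e) ^+ 2
        = eta * (3 - eta * L) / 2 * (b - e) ^+ 2 by rewrite /c; field.
by rewrite mulr_ge0 ?sqr_ge0 ?divr_ge0 ?mulr_ge0 ?ltW //; lra.
Qed.

Theorem mainTheorem4 (R : realType) (m n : nat) (f : 'M[R]_(m, n) -> R)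
    (L eta : R) (Xt Bt Delta : 'M[R]_(m, n)) :
  (n <= m)%N ->
  (forall X, differentiable f X) ->
  0 < L ->
  (forall X Y, nuc_norm (grad f X - grad f Y) <= L * spec_norm (X - Y)) ->
  0 < eta -> eta * L <= 1 ->
  (forall D : 'M[R]_(m, n),
     \tr (Bt^T *m Delta) + (2 * eta)^-1 * spec_norm Delta ^+ 2
     <= \tr (Bt^T *m D) + (2 * eta)^-1 * spec_norm D ^+ 2) ->
  (eta / 2 - eta ^+ 2 * L / 2) * nuc_norm (grad f Xt) ^+ 2
  <= 2 * (f Xt - f (Xt + Delta))
     + (2 * eta - eta ^+ 2 * L) * nuc_norm (grad f Xt - Bt) ^+ 2.
Proof.
move=> nm f_diff L_gt0 grad_lip eta_gt0 etaL opt.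
set G := grad f Xt; set b := nuc_norm Bt; set e := nuc_norm (G - Bt).
have [norm_Delta tr_Delta] := spectral_step_norm nm eta_gt0 opt.
have descent := descent_lemma nm f_diff (ltW L_gt0) grad_lip Xt Delta.
have tr_G : \tr (G^T *m Delta) <= \tr (Bt^T *m Delta) + e * spec_norm Delta.
  rewrite -[G in X in X <= _](addrNK Bt) linearD /= mulmxDl mxtraceD addrC lerD2l.
  exact: mxtrace_le_nuc_spec.
have G_le : nuc_norm G <= b + e.
  by rewrite -{1}[G](addrNK Bt) addrC ler_nuc_normD.
apply: le_trans (scalar_step_bound eta_gt0 etaL (nuc_norm_ge0 nm G)
  (nuc_norm_ge0 nm Bt) (nuc_norm_ge0 nm _) G_le) _.
rewrite lerD2r -/b -/e; rewrite norm_Delta tr_Delta -/G -/b in descent tr_G.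
lra.
Qed.
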